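(* Fix one of the three notions of free operations (detection-incoherent, creation-incoherent, detection-creation-incoherent). A functional $M$ from quantum operations to $[0,\infty)$ is a measure if and only if all of the following hold: $M(\Theta)=0\Leftrightarrow\Theta$ is free; $M(\Theta)\ge M(\Phi\circ\Theta)$ for all $\Theta$ and all free $\Phi$; $M(\Theta)\ge M(\Theta\circ\Phi)$ for all $\Theta$ and all free $\Phi$; $M(\Theta)\ge M(\Theta\otimes\mathbb{1})$ for all $\Theta$, where $\mathbb{1}$ is the identity channel on an ancillary system; and $M$ is convex.
   Context: Every finite-dimensional system carries a fixed orthonormal incoherent basis $\{|i\rangle\}$; composite systems use the product basis. The total dephasing map is $\Delta(\rho)=\sum_i|i\rangle\langle i|\rho|i\rangle\langle i|$ (tensor product on composite systems). A quantum operation is a completely positive trace-preserving linear map. $\Phi$ is detection-incoherent iff $\Delta\Phi=\Delta\Phi\Delta$, creation-incoherent iff $\Phi\Delta=\Delta\Phi\Delta$, detection-creation-incoherent iff $\Delta\Phi=\Phi\Delta$. A super-operation is free iff it is a finite composition of elemental super-operations $\Theta\mapsto\Phi\circ\Theta$, $\Theta\mapsto\Theta\circ\Phi$, $\Theta\mapsto\Theta\otimes\Phi$, $\Theta\mapsto\Phi\otimes\Theta$ with $\Phi$ free. A measure is a functional $M$ from quantum operations to $[0,\infty)$ such that (i) $M(\Theta)=0$ iff $\Theta$ is free; (ii) $M(\mathcal{F}[\Theta])\le M(\Theta)$ for all $\Theta$ and all free super-operations $\mathcal{F}$; (iii) $M$ is convex: $M(t\Theta+(1-t)\Psi)\le tM(\Theta)+(1-t)M(\Psi)$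 for $t\in[0,1]$ and $\Theta,\Psi$ with the same input and output systems. *)

From HB Require Import structures.
From mathcomp Require Import all_boot all_order all_algebra.
From mathcomp Require Import complex mxtens.
From mathcomp Require Import reals.
Set Implicit Arguments. Unset Strict Implicit. Unset Printing Implicit Defensive.
Import Order.TTheory GRing.Theory Num.Theory.
Local Open Scope ring_scope.
Local Open Scope complex_scope.

Section QDefs.
Variable R : realType.
Local Notation C := (R[i]).

(* Systems are identified by their dimension; the incoherent basis is the
   standard basis, and the composite system of dimensions n and m is the
   Kronecker product (dimension n*m), whose standard basis is the product basis. *)
Definition qmap (n m : nat) := 'M[C]_n -> 'M[C]_m.

Definition adjmx n m (A : 'M[C]_(n, m)) : 'M[C]_(m, n) :=
  (map_mx (fun z : C => z^*) A)^T.

Definition psd n (A : 'M[C]_n) : Prop :=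
  forall v : 'cV[C]_n, 0 <= (adjmx v *m A *m v) 0 0.

Definition tensmap a1 b1 a2 b2 (T : qmap a1 b1) (P : qmap a2 b2) : qmap (a1 * a2) (b1 * b2) :=
  fun X => \sum_(i < a1) \sum_(j < a1) \sum_(k < a2) \sum_(l < a2)
     X (mxtens_index (i, k)) (mxtens_index (j, l)) *: (T (delta_mx i j) *t P (delta_mx k l)).

Definition qlinear n m (f : qmap n m) : Prop :=
  forall (c : C) (X Y : 'M[C]_n), f (c *: X + Y) = c *: f X + f Y.

Definition completely_positive n m (f : qmap n m) : Prop :=
  forall (k : nat) (X : 'M[C]_(k * n)), psd X -> psd (tensmap (@idfun 'M[C]_k) f X).

Definition trace_preserving n m (f : qmap n m) : Prop :=
  forall X : 'M[C]_n, \tr (f X) = \tr X.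

Definition is_qop n m (f : qmap n m) : Prop :=
  [/\ (0 < n)%N, (0 < m)%N, qlinear f, completely_positive f & trace_preserving f].

Definition deph n : qmap n n :=
  fun X => \matrix_(i, j) (if i == j then X i j else 0).

Inductive free_kind := DI | CI | DCI.

Definition is_free (t : free_kind) n m (f : qmap n m) : Prop :=
  is_qop f /\
  match t with
  | DI  => forall X, deph (f X) = deph (f (deph X))
  | CI  => forall X, f (deph X) = deph (f (deph X))
  | DCI => forall X, deph (f X) = f (deph X)
  end.

Inductive free_superop (t : free_kind) :
  forall a b c d : nat, (qmap a b -> qmap c d) -> Prop :=
| fso_post a b c (P : qmap b c) : is_free t P ->
    @free_superop t a b a c (fun T => P \o T)
| fso_pre a b c (P : qmap c a) : is_free t P ->
    @free_superop t a b c b (fun T => T \o P)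
| fso_tensr a b c d (P : qmap c d) : is_free t P ->
    @free_superop t a b (a * c) (b * d) (fun T => tensmap T P)
| fso_tensl a b c d (P : qmap c d) : is_free t P ->
    @free_superop t a b (c * a) (d * b) (fun T => tensmap P T)
| fso_comp a b c d e f (F : qmap a b -> qmap c d) (G : qmap c d -> qmap e f) :
    free_superop t F -> free_superop t G -> free_superop t (G \o F).

Definition functional := forall n m : nat, qmap n m -> R.

Definition nonneg_on_qops (M : functional) : Prop :=
  forall n m (T : qmap n m), is_qop T -> 0 <= M n m T.

Definition faithful_on_free (t : free_kind) (M : functional) : Prop :=
  forall n m (T : qmap n m), is_qop T -> (M n m T = 0 <-> is_free t T).

Definition convex_functional (M : functional) : Prop :=
  forall n m (T P Q : qmap n m) (s : R), is_qop T -> is_qop P -> 0 <= s <= 1 ->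
    (forall X, Q X = s%:C *: T X + (1 - s)%:C *: P X) ->
    M n m Q <= s * M n m T + (1 - s) * M n m P.

Definition is_measure (t : free_kind) (M : functional) : Prop :=
  [/\ nonneg_on_qops M,
      faithful_on_free t M,
      (forall a b c d (F : qmap a b -> qmap c d) (T : qmap a b),
          free_superop t F -> is_qop T -> M c d (F T) <= M a b T)
    & convex_functional M].

End QDefs.

From HB Require Import structures.
From mathcomp Require Import all_boot all_order all_algebra.
From mathcomp Require Import complex mxtens.
From mathcomp Require Import reals.
From Stdlib Require Import FunctionalExtensionality.
Set Implicit Arguments. Unset Strict Implicit. Unset Printing Implicit Defensive.
Import Order.TTheory GRing.Theory Num.Theory.
Local Open Scope ring_scope.
Local Open Scope complex_scope.

(* Monotonicity under every free super-operation reduces, by induction on the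
   composition, to its four elemental forms.  Pre- and post-composition are
   hypotheses; right tensoring factors as Θ ⊗ Φ = (1 ⊗ Φ) ∘ (Θ ⊗ 1), i.e. an
   identity ancilla followed by the free channel 1 ⊗ Φ; left tensoring is
   Φ ⊗ Θ = S ∘ (Θ ⊗ Φ) ∘ S' for the subsystem swaps S, S', which are free
   permutation channels.  The converse holds because the identity channel is
   free.  The remaining work is closure of CPTP and free maps under composition
   and tensor products; complete positivity of 1 ⊗ Φ follows by regrouping the
   ancilla, and that of Θ ⊗ 1 by swapping it into 1 ⊗ Θ. *)

Section QuantumOperations.
Variable R : realType.
Local Notation C := R[i].
Local Notation idx := mxtens_index.
Local Notation unidx := mxtens_unindex.

Section LinearMaps.
Variables (n m : nat) (f : qmap R n m).
Hypothesis f_lin : qlinear f.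

Lemma qlinear0 : f 0 = 0.
Proof. by have := f_lin (-1) 0 0; rewrite scaler0 addr0 scaleN1r addNr. Qed.

Lemma qlinearD X Y : f (X + Y) = f X + f Y.
Proof. by rewrite -[X]scale1r f_lin !scale1r. Qed.

Lemma qlinearZ c X : f (c *: X) = c *: f X.
Proof. by rewrite -(addr0 (c *: X)) f_lin qlinear0 addr0. Qed.

Lemma qlinear_sum (I : Type) (r : seq I) (P : pred I) (F : I -> 'M[C]_n) :
  f (\sum_(i <- r | P i) F i) = \sum_(i <- r | P i) f (F i).
Proof.
apply: (big_rec2 (fun x y => f x = y)); first exact: qlinear0.
by move=> i x y _ <-; rewrite qlinearD.
Qed.

Lemma qlinear_expand X : f X = \sum_(i < n) \sum_(j < n) X i j *: f (delta_mx i j).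
Proof.
rewrite {1}[X]matrix_sum_delta qlinear_sum.
by apply: eq_bigr => i _; rewrite qlinear_sum; apply: eq_bigr => j _; rewrite qlinearZ.
Qed.

End LinearMaps.

Lemma qlinear_ext n m (f g : qmap R n m) : qlinear f -> qlinear g ->
  (forall i j, f (delta_mx i j) = g (delta_mx i j)) -> f =1 g.
Proof.
move=> f_lin g_lin fg X; rewrite (qlinear_expand f_lin) (qlinear_expand g_lin).
by apply: eq_bigr => i _; apply: eq_bigr => j _; rewrite fg.
Qed.

Lemma qlinear_id n : qlinear (@idfun 'M[C]_n).
Proof. by []. Qed.

Lemma qlinear_comp n m p (f : qmap R n m) (g : qmap R m p) :
  qlinear f -> qlinear g -> qlinear (g \o f).
Proof. by move=> f_lin g_lin c X Y /=; rewrite f_lin g_lin. Qed.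

Lemma mxtens_index_eq m n (a b : 'I_m * 'I_n) : (idx a == idx b) = (a == b).
Proof. exact: (inj_eq (can_inj (@mxtens_indexK m n))). Qed.

Lemma delta_mx_tens m n p q (i : 'I_m) (j : 'I_n) (k : 'I_p) (l : 'I_q) :
  delta_mx i j *t delta_mx k l = delta_mx (idx (i, k)) (idx (j, l)) :> 'M[C]_(_, _).
Proof.
apply/matrixP => x y.
case: (mxtens_indexP x) => i' k'; case: (mxtens_indexP y) => j' l'.
rewrite tensmxE !mxE !mxtens_index_eq !xpair_eqE.
by case: (i' == i); case: (j' == j); case: (k' == k); case: (l' == l);
  rewrite ?mulr1 ?mulr0.
Qed.

Lemma tensmx_suml m n p q (I : Type) (r : seq I) (P : pred I)
    (F : I -> 'M[C]_(m, n)) (B : 'M[C]_(p, q)) :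
  (\sum_(i <- r | P i) F i) *t B = \sum_(i <- r | P i) (F i *t B).
Proof.
apply/matrixP => x y; rewrite mxE !summxE big_distrl /=.
by apply: eq_bigr => i _; rewrite mxE.
Qed.

Lemma tensmx_sumr m n p q (I : Type) (r : seq I) (P : pred I)
    (A : 'M[C]_(m, n)) (F : I -> 'M[C]_(p, q)) :
  A *t (\sum_(i <- r | P i) F i) = \sum_(i <- r | P i) (A *t F i).
Proof.
apply/matrixP => x y; rewrite mxE !summxE big_distrr /=.
by apply: eq_bigr => i _; rewrite mxE.
Qed.

Lemma tensmxZl m n p q c (A : 'M[C]_(m, n)) (B : 'M[C]_(p, q)) :
  (c *: A) *t B = c *: (A *t B).
Proof. by apply/matrixP => x y; rewrite !mxE mulrA. Qed.

Lemma tensmxZr m n p q c (A : 'M[C]_(m, n)) (B : 'M[C]_(p, q)) :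
  A *t (c *: B) = c *: (A *t B).
Proof. by apply/matrixP => x y; rewrite !mxE mulrCA. Qed.

Lemma sum_delta_mx2 (V : lmodType C) m n (i : 'I_m) (j : 'I_n) (G : 'I_m -> 'I_n -> V) :
  \sum_(i' < m) \sum_(j' < n) (delta_mx i j : 'M[C]_(m, n)) i' j' *: G i' j' = G i j.
Proof.
rewrite (bigD1 i) //= (bigD1 j) //= !mxE !eqxx scale1r.
rewrite big1 => [|j' /negbTE nj]; last by rewrite mxE nj andbF scale0r.
rewrite addr0 big1 ?addr0 // => i' /negbTE ni.
by rewrite big1 // => j' _; rewrite mxE ni scale0r.
Qed.

Lemma tensmap_delta a1 b1 a2 b2 (f : qmap R a1 b1) (g : qmap R a2 b2) i j k l :
  tensmap f g (delta_mx i j *t delta_mx k l) = f (delta_mx i j) *t g (delta_mx k l).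
Proof.
pose G i' j' := \sum_(k' < a2) \sum_(l' < a2)
  (delta_mx k l : 'M[C]_a2) k' l' *: (f (delta_mx i' j') *t g (delta_mx k' l')).
transitivity (\sum_(i' < a1) \sum_(j' < a1) (delta_mx i j : 'M[C]_a1) i' j' *: G i' j').
  apply: eq_bigr => i' _; apply: eq_bigr => j' _; rewrite scaler_sumr.
  apply: eq_bigr => k' _; rewrite scaler_sumr; apply: eq_bigr => l' _.
  by rewrite tensmxE scalerA.
rewrite (sum_delta_mx2 i j G).
exact: (sum_delta_mx2 k l (fun k' l' => f (delta_mx i j) *t g (delta_mx k' l'))).
Qed.

Lemma qlinear_tensmap a1 b1 a2 b2 (f : qmap R a1 b1) (g : qmap R a2 b2) :
  qlinear (tensmap f g).
Proof.
move=> c X Y; rewrite /tensmap scaler_sumr -big_split; apply: eq_bigr => i _.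
rewrite scaler_sumr -big_split; apply: eq_bigr => j _.
rewrite scaler_sumr -big_split; apply: eq_bigr => k _.
rewrite scaler_sumr -big_split; apply: eq_bigr => l _.
by rewrite !mxE scalerDl scalerA.
Qed.

Lemma tensmap_tens a1 b1 a2 b2 (f : qmap R a1 b1) (g : qmap R a2 b2) A B :
  qlinear f -> qlinear g -> tensmap f g (A *t B) = f A *t g B.
Proof.
move=> f_lin g_lin; rewrite /tensmap (qlinear_expand f_lin A) (qlinear_expand g_lin B).
rewrite tensmx_suml; apply: eq_bigr => i _; rewrite tensmx_suml; apply: eq_bigr => j _.
rewrite tensmxZl tensmx_sumr scaler_sumr; apply: eq_bigr => k _.
rewrite tensmx_sumr scaler_sumr; apply: eq_bigr => l _.
by rewrite tensmxZr tensmxE scalerA.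
Qed.

Lemma qlinear_ext_tens a b n (f g : qmap R (a * b) n) : qlinear f -> qlinear g ->
  (forall i j k l, f (delta_mx i j *t delta_mx k l) = g (delta_mx i j *t delta_mx k l)) ->
  f =1 g.
Proof.
move=> f_lin g_lin fg; apply: qlinear_ext => // x y.
case: (mxtens_indexP x) => i k; case: (mxtens_indexP y) => j l.
by rewrite -delta_mx_tens fg.
Qed.

Lemma tensmap_comp a1 b1 c1 a2 b2 c2 (f : qmap R a1 b1) (f' : qmap R b1 c1)
    (g : qmap R a2 b2) (g' : qmap R b2 c2) :
  qlinear f' -> qlinear g' ->
  tensmap (f' \o f) (g' \o g) =1 tensmap f' g' \o tensmap f g.
Proof.
move=> f'_lin g'_lin; apply: qlinear_ext_tens; first exact: qlinear_tensmap.
  exact: qlinear_comp (qlinear_tensmap _ _) (qlinear_tensmap _ _).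
by move=> i j k l; rewrite /= !tensmap_delta tensmap_tens.
Qed.

Lemma tensmap_id a b : tensmap (@idfun 'M[C]_a) (@idfun 'M[C]_b) =1 idfun.
Proof.
apply: qlinear_ext_tens; [exact: qlinear_tensmap | exact: qlinear_id |].
by move=> i j k l; rewrite tensmap_delta.
Qed.

Lemma qlinear_deph n : qlinear (@deph R n).
Proof.
move=> c X Y; apply/matrixP => i j; rewrite !mxE.
by case: (i == j); rewrite ?mulr0 ?addr0.
Qed.

Lemma deph_idem n (X : 'M[C]_n) : deph (deph X) = deph X.
Proof. by apply/matrixP => i j; rewrite !mxE; case: (i == j). Qed.

Lemma deph_tens a b (A : 'M[C]_a) (B : 'M[C]_b) : deph (A *t B) = deph A *t deph B.
Proof.
apply/matrixP => x y; case: (mxtens_indexP x) => i k; case: (mxtens_indexP y) => j l.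
rewrite mxE !tensmxE !mxE mxtens_index_eq xpair_eqE.
by case: (i == j); case: (k == l); rewrite ?mulr0 ?mul0r.
Qed.

Lemma deph_tensmap a b : @deph R (a * b) =1 tensmap (@deph R a) (@deph R b).
Proof.
apply: qlinear_ext_tens; [exact: qlinear_deph | exact: qlinear_tensmap |].
by move=> i j k l; rewrite tensmap_delta deph_tens.
Qed.

Lemma qlinear_mxsub m n (s : 'I_m -> 'I_n) : qlinear (mxsub s s : qmap R n m).
Proof. by move=> c X Y; apply/matrixP => i j; rewrite !mxE. Qed.

Lemma adjmx_mul m n p (A : 'M[C]_(m, n)) (B : 'M[C]_(n, p)) :
  adjmx (A *m B) = adjmx B *m adjmx A.
Proof. by rewrite /adjmx map_mxM trmx_mul. Qed.

Lemma psd_congr m n (A : 'M[C]_n) (B : 'M[C]_(n, m)) : psd A -> psd (adjmx B *m A *m B).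
Proof. by move=> A_psd v; have := A_psd (B *m v); rewrite adjmx_mul !mulmxA. Qed.

Lemma mxsub_adjE m n (s : 'I_m -> 'I_n) (X : 'M[C]_n) :
  mxsub s s X = adjmx (colsub s 1%:M) *m X *m colsub s 1%:M.
Proof.
rewrite /adjmx map_mxsub map_mx1 trmx_mxsub trmx1 -mulmxA mulmx_colsub.
by rewrite mul_rowsub_mx mul1mx mulmx1 mxsubrc.
Qed.

Lemma psd_mxsub m n (s : 'I_m -> 'I_n) (X : 'M[C]_n) : psd X -> psd (mxsub s s X).
Proof. by rewrite mxsub_adjE; apply: psd_congr. Qed.

Definition id_tens_ord k m n (s : 'I_m -> 'I_n) (x : 'I_(k * m)) : 'I_(k * n) :=
  idx ((unidx x).1, s (unidx x).2).
Arguments id_tens_ord k {m n} s x.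

Definition swap_tens_ord m n (x : 'I_(m * n)) : 'I_(n * m) :=
  idx ((unidx x).2, (unidx x).1).

Definition assoc_tens_ord k a b (x : 'I_((k * a) * b)) : 'I_(k * (a * b)) :=
  idx ((unidx (unidx x).1).1, idx ((unidx (unidx x).1).2, (unidx x).2)).

Definition unassoc_tens_ord k a b (x : 'I_(k * (a * b))) : 'I_((k * a) * b) :=
  idx (idx ((unidx x).1, (unidx (unidx x).2).1), (unidx (unidx x).2).2).

Lemma mxsub_id_tens_ord k m n (s : 'I_m -> 'I_n) (A : 'M[C]_k) (B : 'M[C]_n) :
  mxsub (id_tens_ord k s) (id_tens_ord k s) (A *t B) = A *t mxsub s s B.
Proof.
apply/matrixP => x y; case: (mxtens_indexP x) => i p; case: (mxtens_indexP y) => j q.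
by rewrite mxE /id_tens_ord !mxtens_indexK !tensmxE mxE.
Qed.

Lemma mxsub_swap_tens m n (A : 'M[C]_m) (B : 'M[C]_n) :
  mxsub (@swap_tens_ord m n) (@swap_tens_ord m n) (B *t A) = A *t B.
Proof.
apply/matrixP => x y; case: (mxtens_indexP x) => i k; case: (mxtens_indexP y) => j l.
by rewrite mxE /swap_tens_ord !mxtens_indexK !tensmxE mulrC.
Qed.

Lemma swap_tens_ord_bij m n : bijective (@swap_tens_ord m n).
Proof.
by exists (@swap_tens_ord n m) => x; case: (mxtens_indexP x) => i k;
  rewrite /swap_tens_ord !mxtens_indexK.
Qed.

Lemma mxsub_assoc_tens k a b (A : 'M[C]_k) (B : 'M[C]_a) (D : 'M[C]_b) :
  mxsub (@assoc_tens_ord k a b) (@assoc_tens_ord k a b) (A *t (B *t D)) = (A *t B) *t D.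
Proof.
apply/matrixP => x y.
case: (mxtens_indexP x) => p l; case: (mxtens_indexP p) => i j.
case: (mxtens_indexP y) => p' l'; case: (mxtens_indexP p') => i' j'.
by rewrite mxE /assoc_tens_ord !mxtens_indexK !tensmxE mulrA.
Qed.

Lemma mxsub_unassoc_tens k a b (A : 'M[C]_k) (B : 'M[C]_a) (D : 'M[C]_b) :
  mxsub (@unassoc_tens_ord k a b) (@unassoc_tens_ord k a b) ((A *t B) *t D) = A *t (B *t D).
Proof.
apply/matrixP => x y.
case: (mxtens_indexP x) => i p; case: (mxtens_indexP p) => j l.
case: (mxtens_indexP y) => i' p'; case: (mxtens_indexP p') => j' l'.
by rewrite mxE /unassoc_tens_ord !mxtens_indexK !tensmxE mulrA.
Qed.

Lemma tensmap_swap a b c d (T : qmap R a b) (P : qmap R c d) :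
  tensmap P T = mxsub (@swap_tens_ord d b) (@swap_tens_ord d b) \o tensmap T P
                  \o mxsub (@swap_tens_ord a c) (@swap_tens_ord a c).
Proof.
apply: functional_extensionality; apply: qlinear_ext_tens; first exact: qlinear_tensmap.
  exact: qlinear_comp (qlinear_comp (qlinear_mxsub _) (qlinear_tensmap _ _)) (qlinear_mxsub _).
by move=> i j k l /=; rewrite tensmap_delta mxsub_swap_tens tensmap_delta mxsub_swap_tens.
Qed.

Lemma cp_mxsub m n (s : 'I_m -> 'I_n) : completely_positive (mxsub s s : qmap R n m).
Proof.
move=> k X X_psd.
have -> : tensmap idfun (mxsub s s) =1
    (mxsub (id_tens_ord k s) (id_tens_ord k s) : qmap R _ _).
  apply: qlinear_ext_tens; [exact: qlinear_tensmap | exact: qlinear_mxsub |].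
  by move=> i j p q; rewrite tensmap_delta mxsub_id_tens_ord.
exact: psd_mxsub.
Qed.

Lemma cp_comp a b c (f : qmap R a b) (g : qmap R b c) : qlinear g ->
  completely_positive f -> completely_positive g -> completely_positive (g \o f).
Proof.
move=> g_lin f_cp g_cp k X X_psd.
by rewrite (tensmap_comp _ _ (@qlinear_id k) g_lin); apply/g_cp/f_cp.
Qed.

Lemma cp_id_tensmap a b c (P : qmap R b c) : qlinear P -> completely_positive P ->
  completely_positive (tensmap (@idfun 'M[C]_a) P).
Proof.
move=> P_lin P_cp k X X_psd.
pose assoc := @assoc_tens_ord k a b; pose unassoc := @unassoc_tens_ord k a c.
have -> : tensmap idfun (tensmap idfun P) =1
    mxsub unassoc unassoc \o tensmap (@idfun 'M[C]_(k * a)) P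
      \o (mxsub assoc assoc : qmap R _ _).
  apply: qlinear_ext_tens => [||i j p q]; first exact: qlinear_tensmap.
    exact: qlinear_comp (qlinear_comp (qlinear_mxsub _) (qlinear_tensmap _ _)) (qlinear_mxsub _).
  case: (mxtens_indexP p) => i1 k1; case: (mxtens_indexP q) => j1 l1.
  rewrite -delta_mx_tens (tensmap_tens _ _ (@qlinear_id _) (qlinear_tensmap _ _)) /=.
  rewrite tensmap_delta mxsub_assoc_tens (tensmap_tens _ _ (@qlinear_id _) P_lin).
  by rewrite mxsub_unassoc_tens.
by apply/psd_mxsub/P_cp/psd_mxsub.
Qed.

Lemma cp_tensmap a1 b1 a2 b2 (T : qmap R a1 b1) (P : qmap R a2 b2) :
  qlinear T -> qlinear P -> completely_positive T -> completely_positive P ->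
  completely_positive (tensmap T P).
Proof.
move=> T_lin P_lin T_cp P_cp.
have T_id_cp : completely_positive (tensmap T (@idfun 'M[C]_b2)).
  rewrite tensmap_swap; apply: cp_comp (cp_mxsub _) _.
    exact: qlinear_comp (qlinear_tensmap _ _) (qlinear_mxsub _).
  exact: cp_comp (qlinear_mxsub _) (cp_id_tensmap _ _) (cp_mxsub _).
have -> : tensmap T P = tensmap T idfun \o tensmap (@idfun 'M[C]_a1) P.
  exact/functional_extensionality/(tensmap_comp _ _ T_lin (@qlinear_id _)).
exact: cp_comp (qlinear_tensmap _ _) (cp_id_tensmap _ _) T_id_cp.
Qed.

Lemma mxtrace_tens m n (A : 'M[C]_m) (B : 'M[C]_n) : \tr (A *t B) = \tr A * \tr B.
Proof.
rewrite /mxtrace mulr_sum; apply: eq_bigr => x _.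
by case: (mxtens_indexP x) => i k; rewrite tensmxE mxtens_indexK.
Qed.

Lemma tp_tensmap a1 b1 a2 b2 (T : qmap R a1 b1) (P : qmap R a2 b2) :
  trace_preserving T -> trace_preserving P -> trace_preserving (tensmap T P).
Proof.
move=> T_tp P_tp X.
rewrite (qlinear_expand (qlinear_tensmap T P)) {2}[X]matrix_sum_delta.
rewrite !linear_sum; apply: eq_bigr => x _.
rewrite !linear_sum; apply: eq_bigr => y _; rewrite !linearZ /=.
case: (mxtens_indexP x) => i k; case: (mxtens_indexP y) => j l.
by rewrite -delta_mx_tens tensmap_delta !mxtrace_tens T_tp P_tp.
Qed.

Lemma tp_mxsub m n (s : 'I_m -> 'I_n) :
  bijective s -> trace_preserving (mxsub s s : qmap R n m).
Proof.
move=> s_bij X; rewrite /mxtrace [RHS](reindex s) /=; last exact: onW_bij.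
by apply: eq_bigr => i _; rewrite mxE.
Qed.

Lemma qop_comp a b c (f : qmap R a b) (g : qmap R b c) :
  is_qop f -> is_qop g -> is_qop (g \o f).
Proof.
case=> a_gt0 _ f_lin f_cp f_tp [_ c_gt0 g_lin g_cp g_tp]; split => //.
- exact: qlinear_comp.
- exact: cp_comp.
- by move=> X /=; rewrite g_tp f_tp.
Qed.

Lemma qop_tensmap a1 b1 a2 b2 (T : qmap R a1 b1) (P : qmap R a2 b2) :
  is_qop T -> is_qop P -> is_qop (tensmap T P).
Proof.
case=> a1_gt0 b1_gt0 T_lin T_cp T_tp [a2_gt0 b2_gt0 P_lin P_cp P_tp].
split; rewrite ?muln_gt0 ?a1_gt0 ?b1_gt0 ?a2_gt0 ?b2_gt0 //.
- exact: qlinear_tensmap.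
- exact: cp_tensmap.
- exact: tp_tensmap.
Qed.

Lemma qop_id n : (0 < n)%N -> is_qop (@idfun 'M[C]_n).
Proof. by move=> n_gt0; split => // k X; rewrite tensmap_id. Qed.

Lemma qop_mxsub m n (s : 'I_m -> 'I_n) : (0 < m)%N -> (0 < n)%N -> bijective s ->
  is_qop (mxsub s s : qmap R n m).
Proof.
move=> m_gt0 n_gt0 s_bij; split => //.
- exact: qlinear_mxsub.
- exact: cp_mxsub.
- exact: tp_mxsub.
Qed.

Lemma free_of_deph_comm t a b (f : qmap R a b) : is_qop f ->
  (forall X, deph (f X) = f (deph X)) -> is_free t f.
Proof.
move=> f_qop f_comm; split => //; case: t => X.
- by rewrite f_comm [in RHS]f_comm deph_idem.
- by rewrite f_comm deph_idem.
- exact: f_comm.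
Qed.

Lemma free_id t n : (0 < n)%N -> is_free t (@idfun 'M[C]_n).
Proof. by move=> n_gt0; apply: free_of_deph_comm => //; apply: qop_id. Qed.

Lemma free_mxsub t m n (s : 'I_m -> 'I_n) : (0 < m)%N -> (0 < n)%N -> bijective s ->
  is_free t (mxsub s s : qmap R n m).
Proof.
move=> m_gt0 n_gt0 s_bij; apply: free_of_deph_comm; first exact: qop_mxsub.
by move=> X; apply/matrixP => i j; rewrite !mxE (bij_eq s_bij); case: (i == j).
Qed.

Lemma eq_tensmap a1 b1 a2 b2 (f f' : qmap R a1 b1) (g g' : qmap R a2 b2) :
  f =1 f' -> g =1 g' -> tensmap f g =1 tensmap f' g'.
Proof. by move=> /functional_extensionality -> /functional_extensionality ->. Qed.

Lemma deph_tensmap_comp a1 b1 a2 b2 (f : qmap R a1 b1) (g : qmap R a2 b2) X :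
  deph (tensmap f g X) = tensmap (@deph R b1 \o f) (@deph R b2 \o g) X.
Proof. by rewrite (tensmap_comp _ _ (@qlinear_deph _) (@qlinear_deph _)) /= -deph_tensmap. Qed.

Lemma tensmap_deph_comp a1 b1 a2 b2 (f : qmap R a1 b1) (g : qmap R a2 b2) X :
  qlinear f -> qlinear g ->
  tensmap f g (deph X) = tensmap (f \o @deph R a1) (g \o @deph R a2) X.
Proof. by move=> f_lin g_lin; rewrite (tensmap_comp _ _ f_lin g_lin) /= -deph_tensmap. Qed.

Lemma free_tensmap t a1 b1 a2 b2 (f : qmap R a1 b1) (g : qmap R a2 b2) :
  is_free t f -> is_free t g -> is_free t (tensmap f g).
Proof.
case=> f_qop f_free [g_qop g_free]; split; first exact: qop_tensmap.
have [f_lin g_lin] : qlinear f /\ qlinear g by case: f_qop; case: g_qop.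
have df_lin := qlinear_comp f_lin (@qlinear_deph b1).
have dg_lin := qlinear_comp g_lin (@qlinear_deph b2).
case: t f_free g_free => /= f_free g_free X.
- by rewrite !deph_tensmap_comp tensmap_deph_comp //; apply: eq_tensmap.
- by rewrite deph_tensmap_comp !tensmap_deph_comp //; apply: eq_tensmap.
- by rewrite deph_tensmap_comp tensmap_deph_comp //; apply: eq_tensmap.
Qed.

Section FreeSuperoperations.
Variables (t : free_kind) (M : functional R).
Arguments M : clear implicits.
Hypothesis M_post : forall n m p (T : qmap R n m) (P : qmap R m p),
  is_qop T -> is_free t P -> M n p (P \o T) <= M n m T.
Hypothesis M_pre : forall n m p (T : qmap R n m) (P : qmap R p n),
  is_qop T -> is_free t P -> M p m (T \o P) <= M n m T.
Hypothesis M_tens_id : forall n m k (T : qmap R n m), (0 < k)%N -> is_qop T ->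
  M (n * k)%N (m * k)%N (tensmap T (@idfun 'M[C]_k)) <= M n m T.

Lemma le_M_tensr a b c d (T : qmap R a b) (P : qmap R c d) :
  is_qop T -> is_free t P -> M _ _ (tensmap T P) <= M a b T.
Proof.
move=> T_qop P_free; have P_qop := P_free.1.
have [[_ b_gt0 _ _ _] [c_gt0 _ P_lin _ _]] := (T_qop, P_qop).
have -> : tensmap T P = tensmap (@idfun 'M[C]_b) P \o tensmap T (@idfun 'M[C]_c).
  exact/functional_extensionality/(tensmap_comp _ _ (@qlinear_id _) P_lin).
apply: le_trans (M_tens_id c_gt0 T_qop); apply: M_post.
  exact: qop_tensmap T_qop (qop_id c_gt0).
exact: free_tensmap (free_id t b_gt0) P_free.
Qed.

Lemma le_M_tensl a b c d (T : qmap R a b) (P : qmap R c d) :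
  is_qop T -> is_free t P -> M _ _ (tensmap P T) <= M a b T.
Proof.
move=> T_qop P_free; have P_qop := P_free.1.
have [[a_gt0 b_gt0 _ _ _] [c_gt0 d_gt0 _ _ _]] := (T_qop, P_qop).
have TP_qop := qop_tensmap T_qop P_qop.
have swap_free m n : (0 < m)%N -> (0 < n)%N ->
    is_free t (mxsub (@swap_tens_ord m n) (@swap_tens_ord m n) : qmap R _ _).
  move=> m_gt0 n_gt0; apply: free_mxsub (swap_tens_ord_bij _ _);
  by rewrite muln_gt0 ?m_gt0 ?n_gt0.
rewrite (tensmap_swap T P); apply: le_trans (M_post _ (swap_free _ _ d_gt0 b_gt0)) _.
  exact: qop_comp (swap_free _ _ a_gt0 c_gt0).1 TP_qop.
apply: le_trans (M_pre TP_qop (swap_free _ _ a_gt0 c_gt0)) _.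
exact: le_M_tensr.
Qed.

Lemma free_superop_monotone a b c d (F : qmap R a b -> qmap R c d) :
  free_superop t F -> forall T, is_qop T -> is_qop (F T) /\ M c d (F T) <= M a b T.
Proof.
elim=> {a b c d F} [a b c P P_free | a b c P P_free | a b c d P P_free | a b c d P P_free |
    a b c d e f F G _ IH_F _ IH_G] T T_qop.
- by split; [exact: qop_comp T_qop P_free.1 | exact: M_post].
- by split; [exact: qop_comp P_free.1 T_qop | exact: M_pre].
- by split; [exact: qop_tensmap T_qop P_free.1 | exact: le_M_tensr].
- by split; [exact: qop_tensmap P_free.1 T_qop | exact: le_M_tensl].
have [FT_qop le_FT] := IH_F T T_qop; have [GFT_qop le_GFT] := IH_G _ FT_qop.
by split => //; apply: le_trans le_GFT le_FT.
Qed.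

End FreeSuperoperations.
End QuantumOperations.

Theorem proposition13 (R : realType) (t : free_kind) (M : functional R) :
  nonneg_on_qops M ->
  (is_measure t M <->
   [/\ faithful_on_free t M,
       (forall n m p (T : qmap R n m) (P : qmap R m p),
          is_qop T -> is_free t P -> M n p (P \o T) <= M n m T),
       (forall n m p (T : qmap R n m) (P : qmap R p n),
          is_qop T -> is_free t P -> M p m (T \o P) <= M n m T),
       (forall n m k (T : qmap R n m), (0 < k)%N -> is_qop T ->
          M (n * k)%N (m * k)%N (tensmap T (@idfun 'M[R[i]]_k)) <= M n m T)
     & convex_functional M]).
Proof.
move=> M_ge0; split.
  case=> _ M_faithful M_mono M_convex; split => //.
  - move=> n m p T P T_qop P_free; exact: M_mono (fso_post _ P_free) T_qop.
  - move=> n m p T P T_qop P_free; exact: M_mono (fso_pre _ P_free) T_qop.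
  - move=> n m k T k_gt0 T_qop; exact: M_mono (fso_tensr n m (free_id _ t k_gt0)) T_qop.
case=> M_faithful M_post M_pre M_tens_id M_convex; split => // a b c d F T F_free T_qop.
by have [] := free_superop_monotone M_post M_pre M_tens_id F_free T_qop.
Qed.
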